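(* Consider the following MIMO flat-fading model. Fix integers $l_{\mathrm t},l_{\mathrm r},n\ge1$, a known pilot matrix $S=[s_{t,k}]\in\mathbb{C}^{n\times l_{\mathrm t}}$, channel prior $\vec{\mathbf h}\sim\mathcal{CN}(\vec\mu_{\vec{\mathbf h}},\Sigma_{\vec{\mathbf h}})$ with $\Sigma_{\vec{\mathbf h}}$ positive definite, frequency offset prior $\mathbf f_\delta\sim\mathcal N(\mu_{\mathbf f_\delta},\sigma^2_{\mathbf f_\delta})$, and i.i.d. $\mathcal{CN}(0,1)$ noise, mutually independent, with observations $y_{r,k}=e^{j2\pi\mathbf f_\delta(k-1)}\sum_t s_{t,k}h_{r,t}+n_{r,k}$. For a given observation $\vec y$ and $k=1,\dots,n-1$ define $$z_k=\sum_{r,t}s_{t,k+1}y_{r,k+1}^*b_{r,t}+\sum_{k_1=k+1}^{n}\sum_{r_1,t_1,r_2,t_2}a_{r_1,t_1,r_2,t_2}\,s_{t_1,k_1}s^*_{t_2,k_1-k}\,y_{r_2,k_1-k}\,y^*_{r_1,k_1},$$ and write $z_k=r_ke^{-j\theta_k}$ with $r_k\ge0$, $\theta_k\in\mathbb R$. Then $$\frac{\partial g(\vec y,f_\delta)}{\partial f_\delta}=-4\pi\,\mathrm{Im}\Big[\sum_{k=1}^{n-1}e^{j2\pi f_\delta k}\,k\,r_ke^{-j\theta_k}\Big]-\sigma_{\mathbf f_\delta}^{-2}(f_\delta-\mu_{\mathbf f_\delta})=-4\pi\sum_{k=1}^{n-1}k\,r_k\sin\!\Big(2\pi k\Big(f_\delta-\frac{\theta_k}{2\pi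 k}\Big)\Big)-\sigma_{\mathbf f_\delta}^{-2}(f_\delta-\mu_{\mathbf f_\delta}),$$ and the optimal solution $f_\delta$ of the MAP frequency offset estimation problem $\max_{f_\delta}f_{\vec{\mathbf y}|\mathbf f_\delta}(\vec y|f_\delta)f_{\mathbf f_\delta}(f_\delta)$ (equivalently $\max_{f_\delta}g(\vec y,f_\delta)$) satisfies $\frac{\partial g(\vec y,f_\delta)}{\partial f_\delta}=0$.
   Context: Sums over $r,r_1,r_2$ range over $1..l_{\mathrm r}$ and over $t,t_1,t_2$ over $1..l_{\mathrm t}$; ${}^*$ is complex conjugation. $\vec{\mathbf h}$ stacks $h_{r,t}$ in position $(r-1)l_{\mathrm t}+t$; $\vec y$ stacks $y_{r,k}$ in position $(r-1)n+k$. $F(f)=\mathrm{diag}(e^{j2\pi f(k-1)})_{k=1..n}$, $X(f)=F(f)S$, $\grave X(f)=I_{l_{\mathrm r}}\otimes X(f)$, $\grave S=I_{l_{\mathrm r}}\otimes S$. $A=(\grave S^\dagger\grave S+\Sigma_{\vec{\mathbf h}}^{-1})^{-1}$ with $a_{r_1,t_1,r_2,t_2}$ its entry in row $(r_1-1)l_{\mathrm t}+t_1$ and column $(r_2-1)l_{\mathrm t}+t_2$; $\vec b=(I-A\grave S^\dagger\grave S)\vec\mu_{\vec{\mathbf h}}$ with $b_{r,t}$ its entry in position $(r-1)l_{\mathrm t}+t$. $g(\vec y,f_\delta)=2\,\mathrm{Re}[\vec b^\dagger\grave X(f_\delta)^\dagger\vec y]+(\grave X(f_\delta)^\dagger\vec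 y)^\dagger A(\grave X(f_\delta)^\dagger\vec y)-\frac12\sigma_{\mathbf f_\delta}^{-2}|f_\delta-\mu_{\mathbf f_\delta}|^2$. *)

From HB Require Import structures.
From mathcomp Require Import all_boot all_order all_algebra.
From mathcomp Require Import all_classical all_reals all_analysis.
From mathcomp Require Import complex mxtens.
Set Implicit Arguments. Unset Strict Implicit. Unset Printing Implicit Defensive.
Import Order.TTheory GRing.Theory Num.Theory.
Local Open Scope ring_scope.
Local Open Scope complex_scope.

Section Model.
Variable R : realType.
Local Notation C := R[i].

Definition expj (x : R) : C := cos x +i* sin x.

Definition ctmx m p (M : 'M[C]_(m, p)) : 'M[C]_(p, m) := (map_mx Num.conj M)^T.

Definition posdefmx N (M : 'M[C]_N) : Prop :=
  ctmx M = M /\ forall x : 'cV[C]_N, x != 0 -> 0 < (ctmx x *m M *m x) 0 0.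

(* stacking: entry (i, j) of Y goes to position i * p + j (0-based),
   i.e. (r-1) p + k in 1-based indexing; consistent with the Kronecker
   product tensmx. *)
Definition vecm m p (Y : 'M[C]_(m, p)) : 'cV[C]_(m * p) :=
  \col_q Y (mxtens_unindex q).1 (mxtens_unindex q).2.

Variables (lt lr n : nat).
(* S : n x l_t pilot matrix, S k t = s_{t,k} (0-based k) *)
Variable S : 'M[C]_(n, lt).
(* Mu r t = mu_{h_{r,t}}, the prior mean; vec h stacked as in vecm *)
Variable Mu : 'M[C]_(lr, lt).
Variable Sig : 'M[C]_(lr * lt).
Variables (muf sf : R).    (* prior mean and standard deviation of f_delta *)
Variable Y : 'M[C]_(lr, n). (* Y r k = y_{r,k} (0-based k) *)

Definition Fmx (f : R) : 'M[C]_n := diag_mx (\row_(k < n) expj (2 * pi * f * (k : nat)%:R)).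
Definition Xmx (f : R) : 'M[C]_(n, lt) := Fmx f *m S.
Definition Xg (f : R) : 'M[C]_(lr * n, lr * lt) := (1%:M : 'M[C]_lr) *t Xmx f.
Definition Sg : 'M[C]_(lr * n, lr * lt) := (1%:M : 'M[C]_lr) *t S.

Definition Amx : 'M[C]_(lr * lt) := invmx (ctmx Sg *m Sg + invmx Sig).
Definition bvec : 'cV[C]_(lr * lt) := (1%:M - Amx *m ctmx Sg *m Sg) *m vecm Mu.

Definition a_ (r1 : 'I_lr) (t1 : 'I_lt) (r2 : 'I_lr) (t2 : 'I_lt) : C :=
  Amx (mxtens_index (r1, t1)) (mxtens_index (r2, t2)).
Definition b_ (r : 'I_lr) (t : 'I_lt) : C := bvec (mxtens_index (r, t)) 0.

(* g(y, f) ; the quadratic form (X^dag y)^dag A (X^dag y) is real since A is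
   Hermitian, we take its real part to obtain a real-valued function *)
Definition gfun (f : R) : R :=
  let u := ctmx (Xg f) *m vecm Y in
  2 * complex.Re ((ctmx bvec *m u) 0 0)
  + complex.Re ((ctmx u *m Amx *m u) 0 0)
  - 2^-1 * sf ^- 2 * (f - muf) ^+ 2.

(* densities of the MAP problem:
   y | f_delta ~ CN(Xg f mu_h, Xg f Sigma Xg f^dag + I), f_delta ~ N(muf, sf^2) *)
Definition condcov (f : R) : 'M[C]_(lr * n) := Xg f *m Sig *m ctmx (Xg f) + 1%:M.
Definition lik (f : R) : R :=
  let d := vecm Y - Xg f *m vecm Mu in
  expR (- complex.Re ((ctmx d *m invmx (condcov f) *m d) 0 0))
  / (pi ^+ (lr * n) * complex.Re (\det (condcov f))).
Definition prior (f : R) : R :=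
  expR (- (f - muf) ^+ 2 / (2 * sf ^+ 2)) / Num.sqrt (2 * pi * sf ^+ 2).
Definition post (f : R) : R := lik f * prior f.

End Model.

Section Z.
Variable R : realType.
Local Notation C := R[i].
Variables (lt lr n : nat).
Variable S : 'M[C]_(n.+1, lt).
Variable Mu : 'M[C]_(lr, lt).
Variable Sig : 'M[C]_(lr * lt).
Variable Y : 'M[C]_(lr, n.+1).

(* z_k for 1 <= k <= n (paper: k = 1..n_paper-1 with n_paper = n.+1);
   all row indices below are 0-based: paper's s_{t,k+1} is S (k) t, etc. *)
Definition zk (k : nat) : C :=
  \sum_(r < lr) \sum_(t < lt)
     S (inord k) t * Num.conj (Y r (inord k)) * b_ S Mu Sig r t
  + \sum_(k1 < n.+1 | (k <= k1)%N)
      \sum_(r1 < lr) \sum_(t1 < lt) \sum_(r2 < lr) \sum_(t2 < lt)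
        a_ S Sig r1 t1 r2 t2 * S k1 t1 * Num.conj (S (inord (k1 - k)) t2)
        * Y r2 (inord (k1 - k)) * Num.conj (Y r1 k1).
End Z.

From HB Require Import structures.
From mathcomp Require Import all_boot all_order all_algebra.
From mathcomp Require Import all_classical all_reals all_analysis.
From mathcomp Require Import complex mxtens spectral sesquilinear.
From mathcomp Require Import ring lra.
Import Order.TTheory GRing.Theory Num.Theory.
Local Open Scope ring_scope.
Local Open Scope complex_scope.

(* Write u(f) = X(f)^† y as the trigonometric sum of the e^{-j2πfk} v_k, where v_k
   is the k-th received sample matched against the pilots.  Then g is a
   trigonometric polynomial in f plus the Gaussian prior term, and it can be
   differentiated term by term.  Since A is Hermitian, the coefficient of the
   pair (k1, k2) in the quadratic part is the conjugate of that of (k2, k1), so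
   the double sum collapses onto the lags k = k1 - k2 > 0; collecting the linear
   and quadratic contributions of lag k gives exactly z_k.

   For the MAP problem, X(f) = U(f) (I ⊗ S) with U(f) = I ⊗ F(f) unitary, so the
   covariance of y given f is U(f) M U(f)^† with M = (I ⊗ S) Σ (I ⊗ S)^† + I
   independent of f.  The Woodbury identity M^-1 = I - (I ⊗ S) A (I ⊗ S)^† turns
   the exponent of the likelihood into g(f) plus a constant, so the posterior is
   K e^{g(f)} with K > 0.  Hence both problems have the same maximizers, where
   the derivative of g vanishes by Fermat's rule. *)

Section ConjugateTranspose.
Context {R : realType}.
Local Notation C := R[i].

Lemma ctmxE m p (A : 'M[C]_(m, p)) i j : ctmx A i j = Num.conj (A j i).
Proof. by rewrite /ctmx !mxE. Qed.

Lemma ctmxD m p (A B : 'M[C]_(m, p)) : ctmx (A + B) = ctmx A + ctmx B.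
Proof. by apply/matrixP => i j; rewrite !(ctmxE, mxE) rmorphD. Qed.

Lemma ctmxB m p (A B : 'M[C]_(m, p)) : ctmx (A - B) = ctmx A - ctmx B.
Proof. by apply/matrixP => i j; rewrite !(ctmxE, mxE) rmorphB. Qed.

Lemma ctmx_sum m p (I : Type) (r : seq I) (F : I -> 'M[C]_(m, p)) :
  ctmx (\sum_(i <- r) F i) = \sum_(i <- r) ctmx (F i).
Proof.
apply: (big_morph _ (@ctmxD m p)).
by apply/matrixP => i j; rewrite !(ctmxE, mxE) rmorph0.
Qed.

Lemma ctmxZ m p c (A : 'M[C]_(m, p)) : ctmx (c *: A) = Num.conj c *: ctmx A.
Proof. by apply/matrixP => i j; rewrite !(ctmxE, mxE) rmorphM. Qed.

Lemma ctmxK m p (A : 'M[C]_(m, p)) : ctmx (ctmx A) = A.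
Proof. by apply/matrixP => i j; rewrite !ctmxE conjCK. Qed.

Lemma ctmx_mul m p q (A : 'M[C]_(m, p)) (B : 'M[C]_(p, q)) :
  ctmx (A *m B) = ctmx B *m ctmx A.
Proof. by rewrite /ctmx map_mxM trmx_mul. Qed.

Lemma ctmx1 m : ctmx (1%:M : 'M[C]_m) = 1%:M.
Proof. by rewrite /ctmx map_mx1 trmx1. Qed.

Lemma ctmx_inv m (A : 'M[C]_m) : ctmx (invmx A) = invmx (ctmx A).
Proof. by rewrite /ctmx map_invmx trmx_inv. Qed.

Lemma ctmx_eq0 m p (A : 'M[C]_(m, p)) : (ctmx A == 0) = (A == 0).
Proof.
have ctmx0 n q : ctmx (0 : 'M[C]_(n, q)) = 0.
  by apply/matrixP => i j; rewrite !(ctmxE, mxE) rmorph0.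
by apply/eqP/eqP => [A0|->]; rewrite ?ctmx0 // -[A]ctmxK A0 ctmx0.
Qed.

Lemma ctmx_tens m p q r (A : 'M[C]_(m, p)) (B : 'M[C]_(q, r)) :
  ctmx (A *t B) = ctmx A *t ctmx B.
Proof. by rewrite /ctmx map_mxT trmx_tens. Qed.

Lemma ctmx_trmxC m p (A : 'M[C]_(m, p)) : ctmx A = (A ^t* )%sesqui.
Proof. by rewrite /ctmx map_trmx. Qed.

Lemma conj_ctmx_mulmx m (x y : 'cV[C]_m) :
  Num.conj ((ctmx x *m y) 0 0) = (ctmx y *m x) 0 0.
Proof. by rewrite -ctmxE ctmx_mul ctmxK. Qed.

Lemma Re_conj (z : C) : complex.Re (Num.conj z) = complex.Re z.
Proof. by case: z. Qed.

Lemma Im_conj (z : C) : complex.Im (Num.conj z) = - complex.Im z.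
Proof. by case: z. Qed.

Lemma ImD (z w : C) : complex.Im (z + w) = complex.Im z + complex.Im w.
Proof. exact: raddfD. Qed.

Lemma Im_mul_real (z : C) (x : R) : complex.Im (z * x%:C) = complex.Im z * x.
Proof. by case: z => a b /=; rewrite mulr0 add0r. Qed.

Lemma Re_sum (I : Type) (r : seq I) (P : pred I) (F : I -> C) :
  complex.Re (\sum_(i <- r | P i) F i) = \sum_(i <- r | P i) complex.Re (F i).
Proof. exact: raddf_sum. Qed.

Lemma Im_sum (I : Type) (r : seq I) (P : pred I) (F : I -> C) :
  complex.Im (\sum_(i <- r | P i) F i) = \sum_(i <- r | P i) complex.Im (F i).
Proof. exact: raddf_sum. Qed.

Lemma ctmx_mulmx_sumr m N (x : 'cV[C]_m) (a : 'I_N -> C) (w : 'I_N -> 'cV[C]_m) :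
  (ctmx x *m \sum_k a k *: w k) 0 0 = \sum_k a k * (ctmx x *m w k) 0 0.
Proof.
by rewrite mulmx_sumr summxE; apply: eq_bigr => k _; rewrite -scalemxAr mxE.
Qed.

Lemma ctmx_sum_quad m N (a : 'I_N -> C) (w : 'I_N -> 'cV[C]_m) (A : 'M[C]_m) :
  (ctmx (\sum_k a k *: w k) *m A *m \sum_k a k *: w k) 0 0 =
  \sum_k1 \sum_k2 Num.conj (a k1) * a k2 * (ctmx (w k1) *m A *m w k2) 0 0.
Proof.
rewrite ctmx_sum !mulmx_suml summxE; apply: eq_bigr => k1 _.
rewrite mulmx_sumr summxE; apply: eq_bigr => k2 _.
by rewrite ctmxZ -!scalemxAl -scalemxAr !mxE mulrA.
Qed.

Lemma ctmx_mulmxE m (x y : 'cV[C]_m) (A : 'M[C]_m) :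
  (ctmx x *m A *m y) 0 0 = \sum_p \sum_q Num.conj (x p 0) * A p q * y q 0.
Proof.
rewrite mxE; under eq_bigr do rewrite mxE mulr_suml.
by rewrite exchange_big; apply: eq_bigr => p _; apply: eq_bigr => q _; rewrite ctmxE.
Qed.

Definition redot {m} (x y : 'cV[C]_m) : R := complex.Re ((ctmx x *m y) 0 0).

Lemma redotC m (x y : 'cV[C]_m) : redot x y = redot y x.
Proof. by rewrite /redot -conj_ctmx_mulmx Re_conj. Qed.

Lemma redotBl m (x x' y : 'cV[C]_m) : redot (x - x') y = redot x y - redot x' y.
Proof. by rewrite /redot ctmxB mulmxBl -raddfB !mxE. Qed.

Lemma redotBr m (x y y' : 'cV[C]_m) : redot x (y - y') = redot x y - redot x y'.
Proof. by rewrite ![redot x _]redotC redotBl. Qed.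

Lemma redot_adj m p (x : 'cV[C]_m) (H : 'M[C]_(m, p)) (y : 'cV[C]_p) :
  redot x (H *m y) = redot (ctmx H *m x) y.
Proof. by rewrite /redot ctmx_mul ctmxK mulmxA. Qed.

End ConjugateTranspose.

Lemma tensmx11 (K : comPzRingType) m p :
  (1%:M : 'M[K]_m) *t (1%:M : 'M[K]_p) = 1%:M.
Proof.
apply/matrixP => i j.
case: (mxtens_indexP i) => a b; case: (mxtens_indexP j) => c d.
rewrite tensmxE !mxE (inj_eq (can_inj (@mxtens_indexK m p))) xpair_eqE.
by case: (a == c); case: (b == d); rewrite /= ?mulr1 ?mulr0.
Qed.

Lemma sum_mxtens_index (V : nmodType) m p (F : 'I_(m * p) -> V) :
  \sum_(q < m * p) F q = \sum_(a < m) \sum_(b < p) F (mxtens_index (a, b)).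
Proof.
have index_bij : {on [pred i | true], bijective (@mxtens_index m p)}.
  by exists (@mxtens_unindex m p) => i _; rewrite (mxtens_indexK, mxtens_unindexK).
by rewrite pair_big (reindex _ index_bij); apply: eq_bigr => -[a b].
Qed.

Section PositiveDefinite.
Context {R : realType}.
Local Notation C := R[i].

Definition psdmx {N} (M : 'M[C]_N) : Prop :=
  ctmx M = M /\ forall x : 'cV[C]_N, 0 <= (ctmx x *m M *m x) 0 0.

Lemma ctmx_mulmx_ge0 m (x : 'cV[C]_m) : 0 <= (ctmx x *m x) 0 0.
Proof.
by rewrite mxE; apply: sumr_ge0 => p _; rewrite ctmxE mulrC mul_conjC_ge0.
Qed.

Lemma ctmx_mulmx_gt0 m (x : 'cV[C]_m) : x != 0 -> 0 < (ctmx x *m x) 0 0.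
Proof.
move=> x_neq0; have [p xp_neq0] : exists p, x p 0 != 0.
  apply/existsP; apply: contraR x_neq0; rewrite negb_exists => /forallP x0.
  by apply/eqP/matrixP => i j; rewrite [j]ord1 mxE; apply/eqP; rewrite -[_ == _]negbK.
rewrite mxE (bigD1 p) //= ltr_pwDl ?ctmxE 1?mulrC ?mul_conjC_gt0 //.
by apply: sumr_ge0 => q _; rewrite ctmxE mulrC mul_conjC_ge0.
Qed.

Lemma psdmx_gram {m p} (B : 'M[C]_(m, p)) : psdmx (ctmx B *m B).
Proof.
split=> [|x]; first by rewrite ctmx_mul ctmxK.
have -> : ctmx x *m (ctmx B *m B) *m x = ctmx (B *m x) *m (B *m x).
  by rewrite ctmx_mul !mulmxA.
exact: ctmx_mulmx_ge0.
Qed.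

Lemma psdmx_congr {m p} (B : 'M[C]_(m, p)) {M : 'M[C]_p} :
  psdmx M -> psdmx (B *m M *m ctmx B).
Proof.
case=> M_herm M_ge0; split=> [|x]; first by rewrite !ctmx_mul ctmxK M_herm mulmxA.
have -> : ctmx x *m (B *m M *m ctmx B) *m x = ctmx (ctmx B *m x) *m M *m (ctmx B *m x).
  by rewrite ctmx_mul ctmxK !mulmxA.
exact: M_ge0.
Qed.

Lemma posdefmx_psd {m} {M : 'M[C]_m} : posdefmx M -> psdmx M.
Proof.
case=> M_herm M_gt0; split=> // x.
by have [->|/M_gt0/ltW] := eqVneq x 0; rewrite ?mulmx0 ?mxE.
Qed.

Lemma posdefmx1 m : posdefmx (1%:M : 'M[C]_m).
Proof. by split=> [|x]; rewrite ?ctmx1 ?mulmx1; last exact: ctmx_mulmx_gt0. Qed.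

Lemma posdefmx_psdD {m} {M P : 'M[C]_m} : psdmx M -> posdefmx P -> posdefmx (M + P).
Proof.
case=> M_herm M_ge0 [P_herm P_gt0]; split=> [|x x_neq0].
  by rewrite ctmxD M_herm P_herm.
by rewrite mulmxDr mulmxDl mxE ltr_wpDl // P_gt0.
Qed.

Lemma posdefmx_unit {m} {M : 'M[C]_m} : posdefmx M -> M \in unitmx.
Proof.
case=> _ M_gt0; rewrite unitmxE unitfE; apply/negP => /det0P [v v_neq0 vM0].
have := M_gt0 (ctmx v); rewrite ctmx_eq0 ctmxK vM0 mul0mx mxE ltxx.
by move/(_ v_neq0).
Qed.

Lemma posdefmx_inv {m} {M : 'M[C]_m} : posdefmx M -> posdefmx (invmx M).
Proof.
move=> M_pd; have M_unit := posdefmx_unit M_pd; case: M_pd => M_herm M_gt0.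
split=> [|x x_neq0]; first by rewrite ctmx_inv M_herm.
have z_neq0 : invmx M *m x != 0.
  move: x_neq0; apply: contra_neq => z0.
  by rewrite -(mulKVmx M_unit x) z0 mulmx0.
have := M_gt0 _ z_neq0.
by rewrite ctmx_mul ctmx_inv M_herm !mulmxA mulmxKV.
Qed.

Lemma posdefmx_det_gt0 {m} {M : 'M[C]_m} : posdefmx M -> 0 < \det M.
Proof.
case=> M_herm M_gt0.
have /orthomx_spectralP M_diag : M \is normalmx.
  by apply/normalmxP; rewrite -ctmx_trmxC M_herm.
set P := spectralmx M in M_diag; set d := spectral_diag M in M_diag.
have P_unitary : P \is unitarymx by apply: spectral_unitarymx.
have P_unit : P \in unitmx by apply: unitarymx_unit.
have PPt : P *m ctmx P = 1%:M by rewrite ctmx_trmxC; apply/unitarymxP.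
have -> : \det M = \prod_i d 0 i.
  rewrite {1}M_diag !det_mulmx det_inv det_diag mulrC mulrA mulrC mulrA.
  by rewrite mulfK // -unitfE -unitmxE.
apply: prodr_gt0 => i _.
have -> : d 0 i = (ctmx (ctmx (row i P)) *m M *m ctmx (row i P)) 0 0.
  have : diag_mx d i i = (P *m M *m ctmx P) i i.
    by rewrite M_diag !mulmxA mulmxV // mul1mx -mulmxA PPt mulmx1.
  rewrite mxE eqxx mulr1n => ->; rewrite ctmxK -row_mul [RHS]mxE mxE.
  by apply: eq_bigr => q _; rewrite !ctmxE !mxE.
apply: M_gt0; rewrite ctmx_eq0; apply/negP => /eqP rowP0.
have : (P *m ctmx P) i i = (1%:M : 'M[C]_m) i i by rewrite PPt.
rewrite !mxE eqxx mulr1n big1 => [/esym/eqP|q _]; first by rewrite oner_eq0.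
have : row i P 0 q = 0 by rewrite rowP0 mxE.
by rewrite mxE => ->; rewrite mul0r.
Qed.

End PositiveDefinite.

Lemma mulmx1_invmx (K : comUnitRingType) m (A B : 'M[K]_m) :
  A *m B = 1%:M -> invmx A = B.
Proof.
move=> AB1; have [A_unit _] := mulmx1_unit AB1.
by rewrite -[invmx A]mulmx1 -AB1 mulmxA mulVmx // mul1mx.
Qed.

Section Woodbury.
Context {R : realType}.
Local Notation C := R[i].
Context {m p : nat} (B : 'M[C]_(m, p)) {Sig : 'M[C]_p}.
Hypothesis Sig_pd : posdefmx Sig.

Lemma gram_addinv_posdef : posdefmx (ctmx B *m B + invmx Sig).
Proof. exact: posdefmx_psdD (psdmx_gram B) (posdefmx_inv Sig_pd). Qed.

Local Notation A := (invmx (ctmx B *m B + invmx Sig)).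

Lemma woodbury : (B *m Sig *m ctmx B + 1%:M) *m (1%:M - B *m A *m ctmx B) = 1%:M.
Proof.
have GA : (ctmx B *m B + invmx Sig) *m A = 1%:M.
  exact: mulmxV (posdefmx_unit gram_addinv_posdef).
have SigGA : Sig *m (ctmx B *m B) *m A + A = Sig.
  rewrite -{2}[A]mul1mx -(mulmxV (posdefmx_unit Sig_pd)) -!mulmxA -mulmxDr.
  by rewrite [ctmx B *m _]mulmxA -mulmxDl GA mulmx1.
have BSigB : B *m Sig *m ctmx B *m (B *m A *m ctmx B) + B *m A *m ctmx B
             = B *m Sig *m ctmx B.
  by rewrite -[in RHS]SigGA mulmxDr mulmxDl !mulmxA.
by rewrite mulmxBr mulmx1 mulmxDl mul1mx BSigB addrAC subrr add0r.
Qed.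

End Woodbury.

Section TriangularSums.
Variable V : zmodType.

Lemma sum_sym_diag0 N (T : nat -> nat -> V) :
  (forall i j, T i j = T j i) -> (forall i, T i i = 0) ->
  \sum_(i < N) \sum_(j < N) T i j = (\sum_(i < N) \sum_(j < N | (j < i)%N) T i j) *+ 2.
Proof.
move=> T_sym T_diag.
have split_row (i : 'I_N) : \sum_(j < N) T i j =
    \sum_(j < N | (j < i)%N) T i j + \sum_(j < N | (i < j)%N) T i j.
  rewrite (bigID (fun j : 'I_N => (j < i)%N)) /=; congr (_ + _).
  rewrite (bigD1 i) /= ?ltnn // T_diag add0r; apply: eq_bigl => j.
  by rewrite -leqNgt -val_eqE /= ltn_neqAle andbC eq_sym.
rewrite (eq_bigr _ (fun i _ => split_row i)) big_split /= mulr2n; congr (_ + _).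
rewrite (exchange_big_dep xpredT) //=.
by apply: eq_bigr => i _; apply: eq_bigr => j _; rewrite T_sym.
Qed.

Lemma sum_ltn_rev {N} (G : nat -> V) (i : 'I_N) :
  \sum_(j < N | (j < i)%N) G j = \sum_(k < N | (0 < k <= i)%N) G (i - k)%N.
Proof.
rewrite -(big_ord_widen _ _ (ltnW (ltn_ord i))) (reindex_inj rev_ord_inj) /=.
transitivity (\sum_(k < i.+1 | (0 < k)%N) G (i - k)%N).
  by rewrite [RHS]big_mkcond big_ord_recl /= add0r.
by rewrite (big_ord_widen_cond _ _ (fun k => G (i - k)%N) (ltn_ord i)).
Qed.

Lemma sum_ltn_lags N (T : nat -> nat -> V) :
  \sum_(i < N) \sum_(j < N | (j < i)%N) T i j =
  \sum_(k < N | (0 < k)%N) \sum_(i < N | (k <= i)%N) T i (i - k)%N.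
Proof.
rewrite (eq_bigr _ (fun (i : 'I_N) _ => sum_ltn_rev (T i) i)).
rewrite (exchange_big_dep xpredT) //= [RHS]big_mkcond; apply: eq_bigr => k _.
by case: ifP => k_gt0; [apply: eq_bigl | apply: big1].
Qed.

End TriangularSums.

Section Phases.
Context {R : realType}.
Local Notation C := R[i].

Lemma expjD (a b : R) : expj a * expj b = expj (a + b) :> C.
Proof.
rewrite /expj cosD sinD; apply/eqP; rewrite eq_complex /=.
by apply/andP; split; apply/eqP; ring.
Qed.

Lemma conj_expj (a : R) : Num.conj (expj a) = expj (- a) :> C.
Proof. by rewrite /expj cosN sinN. Qed.

Lemma Im_expj_polar (a r th : R) :
  complex.Im (expj a * r%:C * expj (- th)) = r * sin (a - th).
Proof. by rewrite -mulrA mulrC -mulrA expjD /expj /= mul0r addr0 addrC. Qed.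

Lemma Im_sum_polar n (r th : nat -> R) (f : R) :
  complex.Im (\sum_(1 <= k < n.+1)
      expj (2 * pi * f * k%:R) * (k%:R)%:C * (r k)%:C * expj (- th k))
  = \sum_(1 <= k < n.+1) k%:R * r k * sin (2 * pi * k%:R * (f - th k / (2 * pi * k%:R))).
Proof.
rewrite Im_sum; apply: eq_big_nat => k /andP[k_gt0 _].
rewrite -[_ * (r k)%:C]mulrA -rmorphM Im_expj_polar; congr (_ * sin _).
have k_neq0 : k%:R != 0 :> R by rewrite pnatr_eq0 -lt0n.
have := @pi_gt0 R; move: (pi : R) => p /gt_eqF p_neq0.
by field; rewrite k_neq0 p_neq0.
Qed.

Lemma Fmx_unitary N (f : R) : ctmx (Fmx N f) *m Fmx N f = 1%:M.
Proof.
rewrite /Fmx mul_mx_diag; apply/matrixP => i j; rewrite [LHS]mxE ctmxE !mxE.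
have [->|j_neq_i] := eqVneq j i; last by rewrite mulr0n rmorph0 mul0r.
by rewrite mulr1n conj_expj expjD addNr /expj cos0 sin0.
Qed.

Lemma scaleRE (k z : R) : k *: z = k * z.
Proof. by []. Qed.

Lemma is_derive_Re_expjM (w : R) (c : C) (x : R) :
  is_derive x 1 (fun y => complex.Re (expj (w * y) * c))
    (- w * complex.Im (expj (w * x) * c)).
Proof.
have dphase : is_derive x 1 ( *%R w) w.
  by have := is_deriveZ w (is_derive_id x (1 : R)); rewrite scaleRE mulr1.
have -> : (fun y => complex.Re (expj (w * y) * c)) =
    complex.Re c \*: (cos \o *%R w) - complex.Im c \*: (sin \o *%R w).
  by apply: funext => y; rewrite !fctE /= !scaleRE; case: c => a b; rewrite /expj /=; ring.
have := is_deriveB (is_deriveZ (complex.Re c) (is_derive1_comp (is_derive_cos _) dphase))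
  (is_deriveZ (complex.Im c) (is_derive1_comp (is_derive_sin _) dphase)).
move/is_derive_eq; apply; rewrite !scaleRE.
by case: c => a b; rewrite /expj /=; ring.
Qed.

Lemma is_derive_sum_pointwise {N} {F : 'I_N -> R -> R} {dF : 'I_N -> R} {x : R} :
  (forall i, is_derive x 1 (F i) (dF i)) ->
  is_derive x 1 (fun y => \sum_(i < N) F i y) (\sum_(i < N) dF i).
Proof. by move=> dF_ok; rewrite -fct_sumE; apply: is_derive_sum. Qed.

End Phases.

Lemma derive1_eq0_at_max {R : realType} (g : R -> R) (x : R) :
  (forall y, derivable g y 1) -> (forall y, g y <= g x) -> derive1 g x = 0.
Proof.
move=> g_derivable g_max; rewrite derive1E; apply: derive_val.
apply: (@derive1_at_max R g (x - 1) (x + 1)) => //; first lra.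
by rewrite in_itv /=; apply/andP; split; lra.
Qed.

Section TrigonometricExpansion.
Context {R : realType} {lt lr n : nat}.
Local Notation C := R[i].
Variables (S : 'M[C]_(n.+1, lt)) (Mu : 'M[C]_(lr, lt)).
Variables (Sig : 'M[C]_(lr * lt)) (muf sf : R) (Y : 'M[C]_(lr, n.+1)).

Local Notation g := (gfun S Mu Sig muf sf Y).

Definition tone (f : R) (k : nat) : C := expj (2 * pi * k%:R * f).

Definition sample_vec (k : nat) : 'cV[C]_(lr * lt) :=
  \col_q (Num.conj (S (inord k) (mxtens_unindex q).2) * Y (mxtens_unindex q).1 (inord k)).

Definition lin_coef (k : nat) : C := (ctmx (sample_vec k) *m bvec S Mu Sig) 0 0.

Definition quad_coef (k1 k2 : nat) : C :=
  (ctmx (sample_vec k1) *m Amx S Sig *m sample_vec k2) 0 0.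

Lemma adj_Xg_vecm f :
  ctmx (Xg lr S f) *m vecm Y = \sum_(k < n.+1) Num.conj (tone f k) *: sample_vec k.
Proof.
apply/matrixP => i j; rewrite [j]ord1 summxE mxE sum_mxtens_index.
case: (mxtens_indexP i) => r t.
rewrite (eq_bigr (fun a => \sum_(k < n.+1) (1%:M : 'M[C]_lr) a r *
   (Num.conj (tone f k) * Num.conj (S k t) * Y a k))); last first.
  move=> a _; apply: eq_bigr => k _.
  rewrite ctmxE /Xg tensmxE /Xmx /Fmx mul_diag_mx !mxE mxtens_indexK /= !rmorphM /=.
  by rewrite conjC_nat /tone [2 * pi * f * _]mulrAC !mulrA.
rewrite exchange_big /=; apply: eq_bigr => k _.
rewrite (bigD1 r) //= big1 => [|a /negbTE a_neq_r]; last by rewrite mxE a_neq_r mul0r.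
by rewrite addr0 !mxE eqxx mul1r mxtens_indexK /= inord_val mulrA.
Qed.

Lemma tone_conj f (k1 k2 : nat) :
  tone f k1 * Num.conj (tone f k2) = expj (2 * pi * (k1%:R - k2%:R) * f).
Proof. by rewrite /tone conj_expj expjD; congr expj; ring. Qed.

Lemma gfun_trig f : g f =
  2 * \sum_(k < n.+1) complex.Re (tone f k * lin_coef k)
  + \sum_(k1 < n.+1) \sum_(k2 < n.+1)
      complex.Re (expj (2 * pi * (k1%:R - k2%:R) * f) * quad_coef k1 k2)
  - 2^-1 * sf ^- 2 * (f - muf) ^+ 2.
Proof.
rewrite /gfun /= adj_Xg_vecm ctmx_mulmx_sumr ctmx_sum_quad !Re_sum.
have lin_termE (k : 'I_n.+1) :
    complex.Re (Num.conj (tone f k) * (ctmx (bvec S Mu Sig) *m sample_vec k) 0 0)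
    = complex.Re (tone f k * lin_coef k).
  by rewrite /lin_coef -conj_ctmx_mulmx -rmorphM Re_conj.
have quad_termE (k1 : 'I_n.+1) :
    complex.Re (\sum_(k2 < n.+1) Num.conj (Num.conj (tone f k1)) * Num.conj (tone f k2)
      * (ctmx (sample_vec k1) *m Amx S Sig *m sample_vec k2) 0 0)
    = \sum_(k2 < n.+1) complex.Re (expj (2 * pi * (k1%:R - k2%:R) * f) * quad_coef k1 k2).
  by rewrite Re_sum; apply: eq_bigr => k2 _; rewrite conjCK tone_conj.
by rewrite (eq_bigr _ (fun k _ => lin_termE k)) (eq_bigr _ (fun k _ => quad_termE k)).
Qed.

Definition gfun_deriv f : R :=
  2 * \sum_(k < n.+1) - (2 * pi * k%:R) * complex.Im (tone f k * lin_coef k)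
  + \sum_(k1 < n.+1) \sum_(k2 < n.+1) - (2 * pi * (k1%:R - k2%:R))
      * complex.Im (expj (2 * pi * (k1%:R - k2%:R) * f) * quad_coef k1 k2)
  - 2^-1 * sf ^- 2 * (2 * (f - muf)).

Lemma is_derive_gfun (f : R) : is_derive f 1 g (gfun_deriv f).
Proof.
have dlin (k : 'I_n.+1) := is_derive_Re_expjM (2 * pi * k%:R) (lin_coef k) f.
have dquad (k1 k2 : 'I_n.+1) :=
  is_derive_Re_expjM (2 * pi * (k1%:R - k2%:R)) (quad_coef k1 k2) f.
have dsq := is_deriveX 2 (is_deriveB (is_derive_id f (1 : R)) (is_derive_cst muf f 1)).
have := is_deriveB (is_deriveD (is_deriveZ 2 (is_derive_sum_pointwise dlin))
  (is_derive_sum_pointwise (fun k1 => is_derive_sum_pointwise (dquad k1))))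
  (is_deriveZ (2^-1 * sf ^- 2) dsq).
set F := (_ - _)%R => dF; have -> : g = F by apply: funext => y; rewrite gfun_trig.
by apply: is_derive_eq dF _; rewrite expr1 subr0 !scaleRE mulr1.
Qed.

Lemma Amx_herm : ctmx Sig = Sig -> ctmx (Amx S Sig) = Amx S Sig.
Proof. by move=> Sig_herm; rewrite /Amx ctmx_inv ctmxD ctmx_mul ctmxK ctmx_inv Sig_herm. Qed.

Lemma quad_coef_conj k1 k2 :
  ctmx Sig = Sig -> Num.conj (quad_coef k1 k2) = quad_coef k2 k1.
Proof.
by move=> Sig_herm; rewrite /quad_coef -ctmxE !ctmx_mul ctmxK Amx_herm // mulmxA.
Qed.

Lemma zk_lags k :
  zk S Mu Sig Y k = lin_coef k + \sum_(i < n.+1 | (k <= i)%N) quad_coef i (i - k).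
Proof.
rewrite /zk /lin_coef /quad_coef mxE sum_mxtens_index; congr (_ + _).
  apply: eq_bigr => r _; apply: eq_bigr => t _.
  by rewrite /b_ ctmxE !mxE mxtens_indexK /= rmorphM /= conjCK.
apply: eq_bigr => i _; rewrite ctmx_mulmxE sum_mxtens_index.
apply: eq_bigr => r1 _; apply: eq_bigr => t1 _; rewrite sum_mxtens_index.
apply: eq_bigr => r2 _; apply: eq_bigr => t2 _.
by rewrite !mxE !mxtens_indexK /= rmorphM /= conjCK inord_val /a_; ring.
Qed.

Lemma lin_deriv_lags f :
  \sum_(k < n.+1) - (2 * pi * k%:R) * complex.Im (tone f k * lin_coef k)
  = - (2 * pi) * \sum_(k < n.+1 | (0 < k)%N) k%:R * complex.Im (tone f k * lin_coef k).
Proof.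
rewrite mulr_sumr (bigID (fun k : 'I_n.+1 => (0 < k)%N)) /= [X in _ + X]big1.
  by rewrite addr0; apply: eq_bigr => k _; rewrite mulrA -mulNr.
by move=> k; rewrite -eqn0Ngt => /eqP ->; rewrite mulr0 oppr0 mul0r.
Qed.

Lemma quad_deriv_lags f : ctmx Sig = Sig ->
  \sum_(k1 < n.+1) \sum_(k2 < n.+1) - (2 * pi * (k1%:R - k2%:R))
      * complex.Im (expj (2 * pi * (k1%:R - k2%:R) * f) * quad_coef k1 k2)
  = - (2 * pi) * ((\sum_(k < n.+1 | (0 < k)%N) \sum_(i < n.+1 | (k <= i)%N)
                     k%:R * complex.Im (tone f k * quad_coef i (i - k))) *+ 2).
Proof.
move=> Sig_herm.
pose T i j := (i%:R - j%:R) * complex.Im (expj (2 * pi * (i%:R - j%:R) * f) * quad_coef i j).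
have T_sym i j : T i j = T j i.
  have conjE : expj (2 * pi * (j%:R - i%:R) * f) * quad_coef j i
      = Num.conj (expj (2 * pi * (i%:R - j%:R) * f) * quad_coef i j).
    by rewrite -quad_coef_conj // -[j%:R - i%:R]opprB mulrN mulNr -conj_expj -rmorphM.
  by rewrite /T conjE Im_conj; ring.
have T_lag i k : (k <= i)%N ->
    T i (i - k)%N = k%:R * complex.Im (tone f k * quad_coef i (i - k)).
  by move=> k_le_i; rewrite /T natrB // opprB addrC subrK /tone.
transitivity (- (2 * pi) * \sum_(i < n.+1) \sum_(j < n.+1) T i j).
  rewrite mulr_sumr; apply: eq_bigr => i _; rewrite mulr_sumr; apply: eq_bigr => j _.
  by rewrite /T mulrA -mulNr.
rewrite sum_sym_diag0 // => [|i]; last by rewrite /T subrr mul0r.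
rewrite sum_ltn_lags; congr (_ * (_ *+ 2)).
by apply: eq_bigr => k _; apply: eq_bigr => i; apply: T_lag.
Qed.

Lemma gfun_deriv_lags f : ctmx Sig = Sig ->
  gfun_deriv f = - (4 * pi) * \sum_(k < n.+1 | (0 < k)%N)
      k%:R * complex.Im (tone f k * zk S Mu Sig Y k) - sf ^- 2 * (f - muf).
Proof.
move=> Sig_herm; rewrite /gfun_deriv lin_deriv_lags quad_deriv_lags //.
set L := \sum_(k < n.+1 | (0 < k)%N) k%:R * complex.Im (tone f k * lin_coef k).
set Q := \sum_(k < n.+1 | (0 < k)%N) \sum_(i < n.+1 | (k <= i)%N)
           k%:R * complex.Im (tone f k * quad_coef i (i - k)).
have -> : \sum_(k < n.+1 | (0 < k)%N) k%:R * complex.Im (tone f k * zk S Mu Sig Y k)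
    = L + Q.
  rewrite /L /Q -big_split /=; apply: eq_bigr => k _.
  by rewrite zk_lags mulrDr ImD mulrDr mulr_sumr Im_sum mulr_sumr.
by rewrite -mulr_natr; move: (sf ^- 2) => s; field.
Qed.

Lemma gfun_deriv_polar (rk th : nat -> R) f : ctmx Sig = Sig ->
  (forall k, (1 <= k <= n)%N -> zk S Mu Sig Y k = (rk k)%:C * expj (- th k)) ->
  gfun_deriv f = - (4 * pi) * complex.Im (\sum_(1 <= k < n.+1)
      expj (2 * pi * f * k%:R) * (k%:R)%:C * (rk k)%:C * expj (- th k))
    - sf ^- 2 * (f - muf).
Proof.
move=> Sig_herm z_polar; rewrite gfun_deriv_lags //.
have -> : \sum_(k < n.+1 | (0 < k)%N) k%:R * complex.Im (tone f k * zk S Mu Sig Y k)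
    = complex.Im (\sum_(1 <= k < n.+1)
        expj (2 * pi * f * k%:R) * (k%:R)%:C * (rk k)%:C * expj (- th k)).
  rewrite Im_sum (big_nat_widenl _ 0) // big_mkord; apply: eq_bigr => k k_gt0.
  rewrite z_polar; last by rewrite k_gt0 -ltnS ltn_ord.
  rewrite mulrC -Im_mul_real /tone.
  by congr complex.Im; rewrite [2 * pi * f * _]mulrAC; ring.
done.
Qed.

End TrigonometricExpansion.

Section Posterior.
Context {R : realType} {lt lr n : nat}.
Local Notation C := R[i].
Variables (S : 'M[C]_(n.+1, lt)) (Mu : 'M[C]_(lr, lt)).
Variables (Sig : 'M[C]_(lr * lt)) (muf sf : R) (Y : 'M[C]_(lr, n.+1)).
Hypothesis Sig_pd : posdefmx Sig.

Local Notation B := (Sg lr S).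
Local Notation A := (Amx S Sig).
Local Notation g := (gfun S Mu Sig muf sf Y).

Definition shift_mx (f : R) : 'M[C]_(lr * n.+1) := (1%:M : 'M[C]_lr) *t Fmx n.+1 f.

Definition base_cov : 'M[C]_(lr * n.+1) := B *m Sig *m ctmx B + 1%:M.

Lemma shift_mx_unitary f : ctmx (shift_mx f) *m shift_mx f = 1%:M.
Proof. by rewrite ctmx_tens tensmx_mul ctmx1 mulmx1 Fmx_unitary tensmx11. Qed.

Lemma shift_mx_unitaryV f : shift_mx f *m ctmx (shift_mx f) = 1%:M.
Proof. exact: mulmx1C (shift_mx_unitary f). Qed.

Lemma Xg_shift f : Xg lr S f = shift_mx f *m B.
Proof. by rewrite /Xg /shift_mx /Sg tensmx_mul mulmx1. Qed.

Lemma condcov_shift f : condcov S Sig f = shift_mx f *m base_cov *m ctmx (shift_mx f).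
Proof.
rewrite /condcov Xg_shift /base_cov ctmx_mul mulmxDr mulmxDl mulmx1.
by rewrite shift_mx_unitaryV !mulmxA.
Qed.

Lemma invmx_condcov f : invmx (condcov S Sig f) =
  shift_mx f *m (1%:M - B *m A *m ctmx B) *m ctmx (shift_mx f).
Proof.
apply: mulmx1_invmx; rewrite condcov_shift -!mulmxA.
rewrite [ctmx (shift_mx f) *m (shift_mx f *m _)]mulmxA shift_mx_unitary mul1mx.
by rewrite !mulmxA -[shift_mx f *m _ *m _]mulmxA (woodbury _ Sig_pd) mulmx1 shift_mx_unitaryV.
Qed.

Lemma det_condcov f : \det (condcov S Sig f) = \det base_cov.
Proof.
rewrite condcov_shift !det_mulmx mulrC mulrA -det_mulmx shift_mx_unitary det1.
by rewrite mul1r.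
Qed.

Lemma Re_det_base_cov_gt0 : 0 < complex.Re (\det base_cov).
Proof.
have cov_pd : posdefmx base_cov.
  exact: posdefmx_psdD (psdmx_congr B (posdefmx_psd Sig_pd)) (posdefmx1 _).
by have := posdefmx_det_gt0 cov_pd; rewrite ltcE => /andP[].
Qed.

Local Notation u f := (ctmx (Xg lr S f) *m vecm Y).
Local Notation Gmu := (ctmx B *m B *m vecm Mu).

Lemma gfun_redot f : g f =
  2 * (redot (vecm Mu) (u f) - redot (u f) (A *m Gmu)) + redot (u f) (A *m u f)
  - 2^-1 * sf ^- 2 * (f - muf) ^+ 2.
Proof.
have -> : redot (vecm Mu) (u f) - redot (u f) (A *m Gmu) = redot (bvec S Mu Sig) (u f).
  by rewrite /bvec mulmxBl mul1mx !mulmxA redotBl [redot (_ *m vecm Mu) _]redotC.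
by rewrite /gfun /redot -mulmxA.
Qed.

Lemma redot_invmx_condcov f (d : 'cV[C]_(lr * n.+1)) :
  complex.Re ((ctmx d *m invmx (condcov S Sig f) *m d) 0 0) =
  redot (ctmx (shift_mx f) *m d) (ctmx (shift_mx f) *m d)
  - redot (ctmx (Xg lr S f) *m d) (A *m (ctmx (Xg lr S f) *m d)).
Proof.
set e := ctmx (shift_mx f) *m d.
have -> : ctmx (Xg lr S f) *m d = ctmx B *m e by rewrite Xg_shift ctmx_mul mulmxA.
have WeE : e - B *m (A *m (ctmx B *m e)) = (1%:M - B *m A *m ctmx B) *m e.
  by rewrite mulmxBl mul1mx !mulmxA.
rewrite -redot_adj -redotBr WeE invmx_condcov.
by rewrite /redot /e ctmx_mul ctmxK !mulmxA.
Qed.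

Definition lik_offset : R :=
  - redot (vecm Y) (vecm Y) - redot (B *m vecm Mu) (B *m vecm Mu) + redot Gmu (A *m Gmu).

Lemma lik_exponent f :
  - complex.Re ((ctmx (vecm Y - Xg lr S f *m vecm Mu) *m invmx (condcov S Sig f)
      *m (vecm Y - Xg lr S f *m vecm Mu)) 0 0)
  = g f + 2^-1 * sf ^- 2 * (f - muf) ^+ 2 + lik_offset.
Proof.
have A_herm : ctmx A = A by apply: Amx_herm; case: Sig_pd.
rewrite redot_invmx_condcov gfun_redot /lik_offset.
set y := vecm Y; set mu := vecm Mu; set U := shift_mx f; set v := ctmx U *m y.
have uE : u f = ctmx B *m v by rewrite Xg_shift ctmx_mul mulmxA.
have -> : ctmx U *m (y - Xg lr S f *m mu) = v - B *m mu.
  by rewrite mulmxBr Xg_shift !mulmxA shift_mx_unitary mul1mx.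
have -> : ctmx (Xg lr S f) *m (y - Xg lr S f *m mu) = u f - Gmu.
  rewrite mulmxBr Xg_shift ctmx_mul -!mulmxA [ctmx U *m (U *m _)]mulmxA.
  by rewrite shift_mx_unitary mul1mx.
have vv : redot v v = redot y y.
  by rewrite -redot_adj mulmxA shift_mx_unitaryV mul1mx.
have muv : redot (B *m mu) v = redot mu (u f) by rewrite uE [RHS]redot_adj ctmxK.
have Gu : redot Gmu (A *m u f) = redot (u f) (A *m Gmu).
  by rewrite redot_adj A_herm redotC.
rewrite mulmxBr !(redotBl, redotBr) vv muv [redot v _]redotC muv Gu.
(* Generalizing the [redot] atoms keeps [lra] from unfolding them. *)
move: (redot y y) (redot mu (u f)) (redot (B *m mu) _) (redot (u f) (A *m u f)).
by move: (redot (u f) (A *m Gmu)) (redot Gmu _) (2^-1 * _) => ? ? ? ? ? ? ?; lra.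
Qed.

Hypothesis sf_gt0 : 0 < sf.

Lemma post_expg : exists2 K : R, 0 < K & forall f, post S Mu Sig muf sf Y f = K * expR (g f).
Proof.
set D := pi ^+ (lr * n.+1) * complex.Re (\det base_cov).
set s := Num.sqrt (2 * pi * sf ^+ 2).
have D_gt0 : 0 < D by rewrite mulr_gt0 ?exprn_gt0 ?pi_gt0 ?Re_det_base_cov_gt0.
have s_gt0 : 0 < s by rewrite sqrtr_gt0 !mulr_gt0 ?exprn_gt0 ?pi_gt0.
exists (expR lik_offset / (D * s)).
  exact: divr_gt0 (expR_gt0 _) (mulr_gt0 D_gt0 s_gt0).
move=> f; rewrite /post /lik /prior lik_exponent det_condcov -/D -/s.
set q := 2^-1 * sf ^- 2 * (f - muf) ^+ 2.
have -> : - (f - muf) ^+ 2 / (2 * sf ^+ 2) = - q by rewrite /q; field; rewrite gt_eqF.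
rewrite (expRD (g f + q)) (expRD (g f)) expRN.
move: (expR (g f)) (expR q) (expR lik_offset) (expR_gt0 q) => eg eq ek eq_gt0.
by field; rewrite !gt_eqF.
Qed.

End Posterior.

Theorem theorem3 (R : realType) (lt lr n : nat)
  (S : 'M[R[i]]_(n.+1, lt.+1)) (Mu : 'M[R[i]]_(lr.+1, lt.+1))
  (Sig : 'M[R[i]]_(lr.+1 * lt.+1)) (muf sf : R)
  (Y : 'M[R[i]]_(lr.+1, n.+1)) (rk th : nat -> R) :
  posdefmx Sig -> 0 < sf ->
  (forall k : nat, (1 <= k <= n)%N ->
     0 <= rk k /\ zk S Mu Sig Y k = (rk k)%:C * expj (- th k)) ->
  (forall f : R,
     is_derive f 1 (gfun S Mu Sig muf sf Y)
       (- (4 * pi) * complex.Im (\sum_(1 <= k < n.+1)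
            expj (2 * pi * f * k%:R) * (k%:R)%:C * (rk k)%:C * expj (- th k))
        - sf ^- 2 * (f - muf))
     /\
     - (4 * pi) * complex.Im (\sum_(1 <= k < n.+1)
            expj (2 * pi * f * k%:R) * (k%:R)%:C * (rk k)%:C * expj (- th k))
        - sf ^- 2 * (f - muf)
     = - (4 * pi) * (\sum_(1 <= k < n.+1)
            k%:R * rk k * sin (2 * pi * k%:R * (f - th k / (2 * pi * k%:R))))
        - sf ^- 2 * (f - muf))
  /\
  (forall f : R, (forall f' : R, post S Mu Sig muf sf Y f' <= post S Mu Sig muf sf Y f) ->
     derive1 (gfun S Mu Sig muf sf Y) f = 0)
  /\
  (forall f : R, (forall f' : R, gfun S Mu Sig muf sf Y f' <= gfun S Mu Sig muf sf Y f) ->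
     derive1 (gfun S Mu Sig muf sf Y) f = 0).
Proof.
move=> Sig_pd sf_gt0 z_polar.
have Sig_herm : ctmx Sig = Sig by case: Sig_pd.
have g_derivable x : derivable (gfun S Mu Sig muf sf Y) x 1.
  by have [] := is_derive_gfun S Mu Sig muf sf Y x.
split; [move=> f; split | split].
- rewrite -(gfun_deriv_polar S Mu Sig muf sf Y) //; first exact: is_derive_gfun.
  by move=> k /z_polar[].
- by rewrite Im_sum_polar.
- move=> f post_max; apply: derive1_eq0_at_max => // f'.
  have [K K_gt0 postE] := post_expg S Mu Sig muf sf Y Sig_pd sf_gt0.
  by have := post_max f'; rewrite !postE ler_pM2l // ler_expR.
- by move=> f; apply: derive1_eq0_at_max.
Qed.
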